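(* Let $\gamma=[0;1,1,c_3,1,c_5,1,c_7,1,\dots]$, i.e. $\gamma$ has infinite continued fraction expansion $[c_0;c_1,c_2,\dots]$ with $c_0=0$, $c_n=1$ for $n$ even $\ge2$ and for $n=1$, and $c_{2n+1}\in\{1,2\}$ for all $n\in\mathbb{N}$. Let $p_n/q_n$ denote its convergents. For every $m\in\mathbb{N}$: (i) if $\lfloor m\gamma\rfloor/m$ is not a convergent of $\gamma$, then $\frac{2}{\pi}m\tan\left(\frac{\pi}{2}(m\gamma-\lfloor m\gamma\rfloor)\right)>1$; (ii) if $\lfloor m\gamma\rfloor=p_{2n}$ and $m=q_{2n}$ for some $n$, and $c_{2n+1}=1$, then $\frac{2}{\pi}m\tan\left(\frac{\pi}{2}(m\gamma-\lfloor m\gamma\rfloor)\right)>\frac{2}{5}$; (iii) if $\lfloor m\gamma\rfloor=p_{2n}$ and $m=q_{2n}$ for some $n$, and $c_{2n+1}=2$, then $\frac{2}{\pi}m\tan\left(\frac{\pi}{2}(m\gamma-\lfloor m\gamma\rfloor)\right)<\frac{4}{\pi}(2-\sqrt{3})$.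
   Context: $[c_0;c_1,c_2,\dots]$ denotes the continued fraction $c_0+\cfrac{1}{c_1+\cfrac{1}{c_2+\cdots}}$. The $n$-th convergent of $\gamma$ is $p_n/q_n=[c_0;c_1,\dots,c_n]$ written in lowest terms with $q_n>0$. $\mathbb{N}=\{1,2,\dots\}$. *)

From HB Require Import structures.
From mathcomp Require Import all_boot all_order all_algebra.
From mathcomp Require Import all_classical all_reals all_analysis.
Set Implicit Arguments. Unset Strict Implicit. Unset Printing Implicit Defensive.
Import Order.TTheory GRing.Theory Num.Theory.
Import numFieldNormedType.Exports.
Local Open Scope ring_scope.
Local Open Scope classical_set_scope.

Fixpoint cf_val (l : seq nat) : rat :=
  match l with
  | [::] => 0
  | [:: a] => a%:R
  | a :: l' => a%:R + (cf_val l')^-1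
  end.

Definition convergent (c : nat -> nat) (n : nat) : rat :=
  cf_val [seq c i | i <- iota 0 n.+1].

Definition cf_p (c : nat -> nat) (n : nat) : int := numq (convergent c n).
Definition cf_q (c : nat -> nat) (n : nat) : int := denq (convergent c n).

Definition cf_value {R : realType} (c : nat -> nat) (g : R) : Prop :=
  (fun n => ratr (convergent c n) : R) @ \oo --> g.

From HB Require Import structures.
From mathcomp Require Import all_boot all_order all_algebra.
From mathcomp Require Import all_classical all_reals all_analysis.
From mathcomp Require Import zify ring lra.
Import Order.TTheory GRing.Theory Num.Theory.
Import numFieldNormedType.Exports.
Local Open Scope ring_scope.

(* Write theta = m gamma - floor (m gamma).  Since tan y > y on (0, pi/2), F > m theta.
   (i) If m theta < 1, bracket q_{i-1} <= m < q_i and write (m, floor (m gamma)) in the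
   unimodular basis (q_{i-1}, p_{i-1}), (q_i, p_i); gamma lies strictly between the two
   convergents, and the signs of the coordinates force m theta >= 1 unless the point is a
   multiple of (q_{i-1}, p_{i-1}).  When p_{i-1}/q_{i-1} lies above gamma this is impossible
   too, because c_i = 1 gives q_i < 2 q_{i-1}.
   (ii), (iii) Here theta = q_{2n} gamma - p_{2n}.  Comparing gamma with p_{2n+4}/q_{2n+4},
   resp. p_{2n+3}/q_{2n+3}, and unfolding the recurrence through the prescribed partial
   quotients gives q_{2n} theta > 2/5, resp. < 1/3; in (iii) convexity of tan together with
   tan (pi/12) = 2 - sqrt 3 turns the latter into the stated bound. *)

Lemma nat_ind2 (P : nat -> Prop) :
  P 0%N -> P 1%N -> (forall n, P n -> P n.+1 -> P n.+2) -> forall n, P n.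
Proof.
move=> P0 P1 IH n; suff : P n /\ P n.+1 by case.
by elim: n => [|n [Pn Pn1]]; split => //; apply: IH.
Qed.

Fixpoint continuant (c : nat -> nat) (x0 x1 : int) (n : nat) : int :=
  match n with
  | 0 => x0
  | 1 => x1
  | S ((S n') as k) => (c k)%:Z * continuant c x0 x1 k + continuant c x0 x1 n'
  end.

(* Shifted by one: cont_p c n.+1 = p_n and cont_q c n.+1 = q_n, with p_{-1} = 1, q_{-1} = 0
   at index 0. *)
Definition cont_p (c : nat -> nat) := continuant c 1%Z (c 0%N)%:Z.
Definition cont_q (c : nat -> nat) := continuant c 0%Z 1%Z.

Lemma continuantSS c x0 x1 n :
  continuant c x0 x1 n.+2 = (c n.+1)%:Z * continuant c x0 x1 n.+1 + continuant c x0 x1 n.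
Proof. by []. Qed.

Lemma cont_pSS c n : cont_p c n.+2 = (c n.+1)%:Z * cont_p c n.+1 + cont_p c n.
Proof. by []. Qed.

Lemma cont_qSS c n : cont_q c n.+2 = (c n.+1)%:Z * cont_q c n.+1 + cont_q c n.
Proof. by []. Qed.

Lemma continuant_det c x0 x1 y0 y1 n :
  continuant c x0 x1 n.+1 * continuant c y0 y1 n - continuant c x0 x1 n * continuant c y0 y1 n.+1
  = (-1) ^+ n * (x1 * y0 - x0 * y1).
Proof.
elim: n => [|n IH]; first by rewrite expr0 mul1r.
by rewrite !continuantSS exprS -mulrA -IH; ring.
Qed.

Lemma cont_det c n :
  cont_p c n.+1 * cont_q c n - cont_p c n * cont_q c n.+1 = (-1) ^+ n.+1.
Proof. by rewrite continuant_det exprS; ring. Qed.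

Definition positive_quotients (c : nat -> nat) := forall i, (0 < i)%N -> (0 < c i)%N.

Lemma continuant_ge c x0 x1 : positive_quotients c ->
  0 <= x0 <= x1 -> forall n,
  [/\ 0 <= continuant c x0 x1 n, continuant c x0 x1 n <= continuant c x0 x1 n.+1
    & x1 <= continuant c x0 x1 n.+1].
Proof.
move=> c_pos /andP[x0_ge0 x01]; elim=> [|n [IH0 IH1 IH2]]; first by split.
by rewrite continuantSS; have := c_pos n.+1 isT; split; nia.
Qed.

Section PositiveQuotients.
Context {c : nat -> nat} (c_pos : positive_quotients c).

Lemma cont_q_bounds n :
  [/\ 0 <= cont_q c n, cont_q c n <= cont_q c n.+1 & 1 <= cont_q c n.+1].
Proof. exact: continuant_ge. Qed.

Lemma cont_q_ge0 n : 0 <= cont_q c n.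
Proof. by have [] := cont_q_bounds n. Qed.

Lemma cont_q_gt0 n : 0 < cont_q c n.+1.
Proof. by have [_ _] := cont_q_bounds n; lia. Qed.

Lemma cont_q_le n : cont_q c n <= cont_q c n.+1.
Proof. by have [] := cont_q_bounds n. Qed.

Lemma cont_q_ge_index n : n%:Z <= cont_q c n.+1.
Proof.
elim/nat_ind2: n => [||n IH0 IH1]; first exact: cont_q_ge0.
  by have := c_pos 1%N isT; rewrite /cont_q /=; lia.
rewrite cont_qSS.
by have := c_pos n.+2 isT; have := cont_q_gt0 n; nia.
Qed.

Lemma cont_q_ltSS n : (0 < n)%N -> cont_q c n.+1 < cont_q c n.+2.
Proof.
case: n => [//|n] _; rewrite [cont_q c n.+3]cont_qSS.
by have := c_pos n.+2 isT; have := cont_q_gt0 n; have := cont_q_ge0 n.+2; nia.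
Qed.

Lemma cont_q_bracket k (m : nat) : cont_q c k <= m%:Z ->
  exists2 i, (k <= i)%N & cont_q c i <= m%:Z < cont_q c i.+1.
Proof.
move=> qk_le.
have bounded i : cont_q c i <= m%:Z -> (i <= m.+1)%N.
  by case: i => [//|i] qi_le; have := cont_q_ge_index i; lia.
case: (ex_maxnP (ex_intro _ k qk_le) bounded) => i qi_le max_i.
exists i; first exact: max_i.
by rewrite qi_le ltNge; apply/negP => /max_i; rewrite ltnn.
Qed.

End PositiveQuotients.

Lemma cont_q_shift c n : cont_q c n.+1 = cont_p (c \o S) n.
Proof.
elim/nat_ind2: n => [||n IH0 IH1]; first by [].
  by rewrite /=; ring.
by rewrite cont_qSS cont_pSS IH0 IH1.
Qed.

Lemma cont_p_shift c n :
  cont_p c n.+1 = (c 0%N)%:Z * cont_p (c \o S) n + cont_q (c \o S) n.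
Proof.
elim/nat_ind2: n => [||n IH0 IH1]; rewrite /=; try ring.
by rewrite cont_pSS IH0 IH1 [cont_p _ n.+2]cont_pSS [cont_q _ n.+2]cont_qSS /=; ring.
Qed.

Lemma cf_val_cons a l : l != [::] -> cf_val (a :: l) = a%:R + (cf_val l)^-1.
Proof. by case: l. Qed.

Lemma convergent_shift c n :
  convergent c n.+1 = (c 0%N)%:R + (convergent (c \o S) n)^-1.
Proof.
rewrite /convergent -cf_val_cons //.
have -> : iota 0 n.+2 = 0%N :: iota (1 + 0) n.+1 by [].
by rewrite iotaDl map_cons -map_comp.
Qed.

Lemma cont_p_gt0 c n : (forall i, (0 < c i)%N) -> 0 < cont_p c n.
Proof.
move=> c_pos; case: n => [//|n].
have c0_ge1 : 1 <= (c 0%N)%:Z by rewrite lez_nat c_pos.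
have [_ _ p_ge] := @continuant_ge c 1 (c 0%N)%:Z (fun i _ => c_pos i)
  (ltac:(by rewrite ler01 c0_ge1)) n.
exact: lt_le_trans ltr01 (le_trans c0_ge1 p_ge).
Qed.

Lemma convergentE c n : positive_quotients c ->
  convergent c n = (cont_p c n.+1)%:~R / (cont_q c n.+1)%:~R.
Proof.
elim: n c => [|n IH] c c_pos; first by rewrite /convergent /= divr1.
have cS_pos i : (0 < (c \o S) i)%N by exact: c_pos.
have pS_neq0 : (cont_p (c \o S) n.+1)%:~R != 0 :> rat.
  by rewrite intr_eq0 gt_eqF // cont_p_gt0.
rewrite convergent_shift IH // [cont_p c _]cont_p_shift [cont_q c _]cont_q_shift.
by rewrite invf_div intrD intrM pmulrn; field.
Qed.

Lemma cont_coprime c n : coprime `|cont_p c n.+1| `|cont_q c n.+1|.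
Proof.
rewrite -coprimezE; apply/coprimezP.
exists ((-1) ^+ n.+1 * cont_q c n, - (-1) ^+ n.+1 * cont_p c n) => /=.
transitivity ((-1) ^+ n.+1 * (cont_p c n.+1 * cont_q c n - cont_p c n * cont_q c n.+1)).
  by ring.
by rewrite cont_det -exprMn mulrNN mulr1 expr1n.
Qed.

Lemma cf_pE c n : positive_quotients c -> cf_p c n = cont_p c n.+1.
Proof.
move=> c_pos; rewrite /cf_p convergentE // coprimeq_num ?cont_coprime //.
by rewrite gtr0_sg ?mul1r // cont_q_gt0.
Qed.

Lemma cf_qE c n : positive_quotients c -> cf_q c n = cont_q c n.+1.
Proof.
move=> c_pos; rewrite /cf_q convergentE // coprimeq_den ?cont_coprime //.
by rewrite gt_eqF ?gtr0_norm // cont_q_gt0.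
Qed.

Lemma cont_cross_ge0 c j k :
  0 <= (-1) ^+ j.+1 * (cont_p c (j + k) * cont_q c j - cont_p c j * cont_q c (j + k)).
Proof.
elim/nat_ind2: k => [||k IH0 IH1]; first by rewrite addn0 subrr mulr0.
  by rewrite addn1 (cont_det c j) -exprMn mulrNN mulr1 expr1n.
rewrite !addnS cont_pSS cont_qSS; rewrite addnS in IH1.
have := leq0n (c (j + k).+1); nia.
Qed.

Lemma cont_cross_SS c j :
  cont_p c j.+2 * cont_q c j - cont_p c j * cont_q c j.+2 = (-1) ^+ j.+1 * (c j.+1)%:Z.
Proof. by rewrite cont_pSS cont_qSS -(cont_det c j); ring. Qed.

Lemma sign_double {T : pzRingType} a : (-1) ^+ (2 * a)%N = 1 :> T.
Proof. by rewrite exprM sqrrN !expr1n. Qed.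

Lemma sign_doubleS {T : pzRingType} a : (-1) ^+ (2 * a).+1 = -1 :> T.
Proof. by rewrite exprS sign_double mulr1. Qed.

Lemma sign_doubleSS {T : pzRingType} a : (-1) ^+ (2 * a).+2 = 1 :> T.
Proof. by rewrite exprS sign_doubleS mulrNN mulr1. Qed.

Section ConvergentsAndValue.
Context {R : realType} {c : nat -> nat} {gamma : R}.
Context (c_pos : positive_quotients c) (c_gamma : cf_value c gamma).

Lemma ratr_convergent n :
  ratr (convergent c n) = (cont_p c n.+1)%:~R / (cont_q c n.+1)%:~R :> R.
Proof. by rewrite convergentE // fmorph_div /= !ratr_int. Qed.

Lemma ratr_convergent_sub n N :
  ratr (convergent c N) - ratr (convergent c n) =
  (cont_p c N.+1 * cont_q c n.+1 - cont_p c n.+1 * cont_q c N.+1)%:~R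
    / (cont_q c N.+1 * cont_q c n.+1)%:~R :> R.
Proof.
have qN := cont_q_gt0 c_pos N; have qn := cont_q_gt0 c_pos n.
rewrite !ratr_convergent rmorphB !rmorphM /=; field.
by rewrite !intr_eq0 !gt_eqF.
Qed.

Lemma convergent_even_le a k :
  ratr (convergent c (2 * a)) <= ratr (convergent c (2 * a + k)) :> R.
Proof.
rewrite -subr_ge0 ratr_convergent_sub divr_ge0 // ?ler0z.
  by have := cont_cross_ge0 c (2 * a).+1 k; rewrite sign_doubleSS mul1r addSn.
by rewrite mulr_ge0 // ltW // cont_q_gt0.
Qed.

Lemma convergent_odd_ge a k :
  ratr (convergent c ((2 * a).+1 + k)) <= ratr (convergent c (2 * a).+1) :> R.
Proof.
rewrite -subr_le0 ratr_convergent_sub pmulr_lle0 ?invr_gt0 ?ltr0z ?lerz0.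
  have := cont_cross_ge0 c (2 * a).+2 k.
  by rewrite exprS sign_doubleSS mulr1 mulN1r oppr_ge0 addSn.
by rewrite mulr_gt0 // cont_q_gt0.
Qed.

Lemma convergent_even_lt_SS a :
  ratr (convergent c (2 * a)) < ratr (convergent c (2 * a).+2) :> R.
Proof.
rewrite -subr_gt0 ratr_convergent_sub cont_cross_SS divr_gt0 ?ltr0z //.
  by rewrite sign_doubleSS mul1r ltz_nat c_pos.
by rewrite mulr_gt0 // cont_q_gt0.
Qed.

Lemma convergent_odd_lt_SS a :
  ratr (convergent c (2 * a).+3) < ratr (convergent c (2 * a).+1) :> R.
Proof.
rewrite -subr_lt0 ratr_convergent_sub cont_cross_SS pmulr_llt0 ?invr_gt0 ?ltr0z.
  by rewrite ltrz0 exprS sign_doubleSS mulr1 mulN1r oppr_lt0 ltz_nat c_pos.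
by rewrite mulr_gt0 // cont_q_gt0.
Qed.

Lemma convergent_even_lt_value a : (cont_p c (2 * a).+1)%:~R < (cont_q c (2 * a).+1)%:~R * gamma.
Proof.
rewrite -ltr_pdivrMl ?ltr0z ?cont_q_gt0 // mulrC -ratr_convergent.
apply: (lt_le_trans (convergent_even_lt_SS a)).
apply: (cvgr_to_ge c_gamma); exists (2 * a).+2 => // N /= le_aN.
have -> : N = (2 * a.+1 + (N - (2 * a).+2))%N by lia.
have -> : (2 * a).+2 = (2 * a.+1)%N by lia.
exact: convergent_even_le.
Qed.

Lemma convergent_odd_gt_value a : (cont_q c (2 * a).+2)%:~R * gamma < (cont_p c (2 * a).+2)%:~R.
Proof.
rewrite -ltr_pdivlMl ?ltr0z ?cont_q_gt0 // mulrC -ratr_convergent.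
apply: (le_lt_trans _ (convergent_odd_lt_SS a)).
apply: (cvgr_to_le c_gamma); exists (2 * a).+3 => // N /= le_aN.
have -> : N = ((2 * a.+1).+1 + (N - (2 * a).+3))%N by lia.
have -> : (2 * a).+3 = (2 * a.+1).+1%N by lia.
exact: convergent_odd_ge.
Qed.

End ConvergentsAndValue.

Lemma recurrence_add5 {c : nat -> nat} {f : nat -> int} {k : nat} :
  (forall j, f j.+2 = (c j.+1)%:Z * f j.+1 + f j) ->
  c k.+1 = 1%N -> c k.+2 = 1%N -> c k.+4 = 1%N ->
  f k.+4.+1 = (2 * (c k.+3)%:Z + 3) * f k.+1 + ((c k.+3)%:Z + 2) * f k.
Proof. by move=> fSS ck1 ck2 ck4; rewrite !fSS ck1 ck2 ck4; ring. Qed.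

Lemma recurrence_add4 {c : nat -> nat} {f : nat -> int} {k : nat} :
  (forall j, f j.+2 = (c j.+1)%:Z * f j.+1 + f j) ->
  c k.+1 = 2%N -> c k.+2 = 1%N ->
  f k.+4 = (3 * (c k.+3)%:Z + 2) * f k.+1 + ((c k.+3)%:Z + 1) * f k.
Proof. by move=> fSS ck1 ck2; rewrite !fSS ck1 ck2; ring. Qed.

Lemma unimodular_decomp (X Y P0 P1 m p : int) : (P1 * X - P0 * Y) ^+ 2 = 1 ->
  exists a b : int, m = a * X + b * Y /\ p = a * P0 + b * P1.
Proof.
move=> det2; exists ((P1 * X - P0 * Y) * (m * P1 - p * Y)).
exists ((P1 * X - P0 * Y) * (p * X - m * P0)).
split; [transitivity ((P1 * X - P0 * Y) ^+ 2 * m) | transitivity ((P1 * X - P0 * Y) ^+ 2 * p)].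
- by rewrite det2 mul1r.
- by ring.
- by rewrite det2 mul1r.
- by ring.
Qed.

Section LatticeBounds.
Context {R : realFieldType}.

Lemma lattice_bound {X Y M : int} (A B : int) {u v : R} :
  0 < u -> 0 < v -> X%:~R * v + Y%:~R * u = 1 -> 0 < X -> 0 < Y ->
  X <= M -> 1 <= B -> Y <= A * X -> 1 <= M%:~R * (A%:~R * u + B%:~R * v).
Proof.
move=> u_gt0 v_gt0 uv1 X_gt0 Y_gt0 XM B_ge1 YAX.
have A_ge0 : 0 <= A by nia.
have XM' : X%:~R <= M%:~R :> R by rewrite ler_int.
have B_ge1' : 1 <= B%:~R :> R by rewrite ler1z.
have YAX' : Y%:~R <= A%:~R * X%:~R :> R by rewrite -intrM ler_int.
have X_gt0' : 0 < X%:~R :> R by rewrite ltr0z.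
have th_ge0 : 0 <= A%:~R * u + B%:~R * v.
  by rewrite addr_ge0 ?mulr_ge0 ?ler0z ?ltW //; lia.
apply: le_trans (ler_wpM2r th_ge0 XM').
have : 0 <= (A%:~R * X%:~R - Y%:~R) * u by rewrite mulr_ge0 ?subr_ge0 // ltW.
have : 0 <= (B%:~R - 1) * (X%:~R * v) by rewrite !mulr_ge0 ?subr_ge0 // ltW.
by move: uv1; nra.
Qed.

(* With (m, p) = a (X, P0) + b (Y, P1), the error m x - p = a (X x - P0) - b (P1 - Y x) is
   negative or at least 1/m unless b = 0. *)
Lemma small_error_below (X Y P0 P1 m p : int) (x : R) :
  0 < X -> 0 < Y -> P1 * X - P0 * Y = 1 ->
  P0%:~R < X%:~R * x -> Y%:~R * x < P1%:~R -> X <= m < Y ->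
  0 <= m%:~R * x - p%:~R -> m%:~R * (m%:~R * x - p%:~R) < 1 -> p * X = m * P0.
Proof.
move=> X_gt0 Y_gt0 det below above /andP[Xm mY] err_ge0 err_lt1.
have [a [b [m_eq p_eq]]] := @unimodular_decomp X Y P0 P1 m p (ltac:(by rewrite det expr1n)).
have uv1 : X%:~R * (P1%:~R - Y%:~R * x) + Y%:~R * (X%:~R * x - P0%:~R) = 1 :> R.
  have det' : P1%:~R * X%:~R - P0%:~R * Y%:~R = 1 :> R by rewrite -!intrM -intrB det.
  by rewrite -[RHS]det'; ring.
have err_eq : m%:~R * x - p%:~R = a%:~R * (X%:~R * x - P0%:~R) - b%:~R * (P1%:~R - Y%:~R * x) :> R.
  by rewrite m_eq p_eq !rmorphD !rmorphM /=; ring.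
rewrite err_eq in err_ge0 err_lt1.
move: below above; rewrite -subr_gt0 -[_ < P1%:~R]subr_gt0 => u_gt0 v_gt0.
case: (ltgtP b 0) => [b_lt0 | b_gt0 | b0]; last by rewrite p_eq m_eq b0; ring.
- have YaX : Y <= a * X by nia.
  have := lattice_bound a (- b) u_gt0 v_gt0 uv1 X_gt0 Y_gt0 Xm (ltac:(lia)) YaX.
  by rewrite intrN mulNr => /le_lt_trans/(_ err_lt1); rewrite ltxx.
- have bY_ge : Y <= b * Y by nia.
  have aX_lt0 : a * X < 0 by lia.
  have a_lt0 : a%:~R < 0 :> R by rewrite ltrz0 -(pmulr_llt0 _ X_gt0).
  have b_gt0' : 0 < b%:~R :> R by rewrite ltr0z.
  by exfalso; move: err_ge0; nra.
Qed.

Lemma no_small_error_above (X Y P0 P1 m p : int) (x : R) :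
  0 < X -> 0 < Y -> Y < 2 * X -> P1 * X - P0 * Y = -1 ->
  X%:~R * x < P0%:~R -> P1%:~R < Y%:~R * x -> X <= m < Y ->
  0 <= m%:~R * x - p%:~R -> m%:~R * (m%:~R * x - p%:~R) < 1 -> False.
Proof.
move=> X_gt0 Y_gt0 Y_lt2X det above below /andP[Xm mY] err_ge0 err_lt1.
have [a [b [m_eq p_eq]]] := @unimodular_decomp X Y P0 P1 m p (ltac:(by rewrite det sqrrN expr1n)).
have uv1 : X%:~R * (Y%:~R * x - P1%:~R) + Y%:~R * (P0%:~R - X%:~R * x) = 1 :> R.
  have det' : P0%:~R * Y%:~R - P1%:~R * X%:~R = 1 :> R.
    by rewrite -!intrM -intrB -opprB det opprK.
  by rewrite -[RHS]det'; ring.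
have err_eq : m%:~R * x - p%:~R = (- a)%:~R * (P0%:~R - X%:~R * x) + b%:~R * (Y%:~R * x - P1%:~R) :> R.
  by rewrite m_eq p_eq intrN !rmorphD !rmorphM /=; ring.
rewrite err_eq in err_ge0 err_lt1.
move: above below; rewrite -subr_gt0 -[P1%:~R < _]subr_gt0 => u_gt0 v_gt0.
case: (leP b 0) => [b_le0 | b_gt0].
- have Na_lt0 : (- a)%:~R < 0 :> R by rewrite ltrz0; nia.
  have b_le0' : b%:~R <= 0 :> R by rewrite lerz0.
  by move: err_ge0; nra.
- have a_lt0 : a < 0 by rewrite -(pmulr_llt0 _ X_gt0); nia.
  have aX_le : X <= - a * X by nia.
  have YaX : Y <= - a * X.
    by case: (b =P 1) => [b1 | b_neq1]; [rewrite b1 in m_eq; lia | nia].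
  have := lattice_bound (- a) b u_gt0 v_gt0 uv1 X_gt0 Y_gt0 Xm b_gt0 YaX.
  by move=> /le_lt_trans/(_ err_lt1); rewrite ltxx.
Qed.

End LatticeBounds.

Lemma scaled_error_gt {R : realFieldType} {a b : nat} {Q P q p : int} {x : R} :
  (0 < b)%N -> 0 < Q -> 0 < q -> p%:~R < q%:~R * x ->
  a%:Z * q <= b%:Z * (Q * (Q * p - P * q)) -> a%:R / b%:R < Q%:~R * (Q%:~R * x - P%:~R).
Proof.
move=> b_gt0 Q_gt0 q_gt0 px abq.
have -> : Q%:~R * (Q%:~R * x - P%:~R) =
    (Q * (Q * p - P * q))%:~R / q%:~R + Q%:~R * Q%:~R * (x - p%:~R / q%:~R) :> R.
  by rewrite !rmorphM rmorphB !rmorphM /=; field; rewrite intr_eq0 gt_eqF.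
rewrite -[ltLHS]addr0 ler_ltD //.
  rewrite ler_pdivrMr ?ltr0n // mulrAC ler_pdivlMr ?ltr0z //.
  by rewrite !pmulrn -!intrM ler_int [X in _ <= X]mulrC.
by rewrite !mulr_gt0 ?ltr0z // subr_gt0 ltr_pdivrMr ?ltr0z // mulrC.
Qed.

Lemma scaled_error_lt {R : realFieldType} {a b : nat} {Q P q p : int} {x : R} :
  (0 < b)%N -> 0 < Q -> 0 < q -> q%:~R * x < p%:~R ->
  b%:Z * (Q * (Q * p - P * q)) <= a%:Z * q -> Q%:~R * (Q%:~R * x - P%:~R) < a%:R / b%:R.
Proof.
move=> b_gt0 Q_gt0 q_gt0 xp abq.
have -> : Q%:~R * (Q%:~R * x - P%:~R) =
    (Q * (Q * p - P * q))%:~R / q%:~R - Q%:~R * Q%:~R * (p%:~R / q%:~R - x) :> R.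
  by rewrite !rmorphM rmorphB !rmorphM /=; field; rewrite intr_eq0 gt_eqF.
rewrite -[ltRHS]subr0 ler_ltB //.
  rewrite ler_pdivlMr ?ltr0n // mulrAC ler_pdivrMr ?ltr0z //.
  by rewrite !pmulrn -!intrM ler_int [X in X <= _]mulrC.
by rewrite !mulr_gt0 ?ltr0z // subr_gt0 ltr_pdivlMr ?ltr0z // mulrC.
Qed.

Section Tangent.
Context {R : realType}.

Lemma cos_gt0_halfpi (x : R) : 0 <= x < pi / 2 -> 0 < cos x.
Proof.
move=> /andP[x_ge0 x_lt]; apply: cos_gt0_pihalf; rewrite x_lt andbT.
by apply: lt_le_trans x_ge0; rewrite oppr_lt0 divr_gt0 // pi_gt0.
Qed.

Lemma tan_MVT (a b : R) : 0 <= a -> a < b -> b < pi / 2 ->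
  exists2 x, a < x < b & tan b - tan a = (cos x)^-2 * (b - a).
Proof.
move=> a_ge0 ab b_lt.
have cos_neq0 x : a <= x <= b -> cos x != 0.
  by case/andP=> ax xb; rewrite gt_eqF // cos_gt0_halfpi // (le_trans a_ge0 ax) (le_lt_trans xb b_lt).
have tan_derive x : x \in `]a, b[%R -> is_derive x 1 tan ((cos x)^-2).
  by rewrite in_itv /= => /andP[ax xb]; apply/is_derive_tan/cos_neq0; rewrite !ltW.
have [|x + ->] := MVT ab tan_derive; last by rewrite in_itv /=; exists x.
apply/continuous_in_subspaceT => x; rewrite mem_setE => /itvP xab.
by apply/continuous_tan/cos_neq0; rewrite !xab.
Qed.

Lemma cos_lt_halfpi (x y : R) : 0 <= x -> x < y -> y < pi / 2 -> cos y < cos x.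
Proof.
move=> x_ge0 xy y_lt; have pi0 := pi_gt0 R.
have x_in : x \in `[0, pi]%R by rewrite in_itv /= x_ge0 /=; lra.
have y_in : y \in `[0, pi]%R by rewrite in_itv /= (le_trans x_ge0 (ltW xy)) /=; lra.
by rewrite ltr_cos.
Qed.

Lemma id_lt_tan (y : R) : 0 < y < pi / 2 -> y < tan y.
Proof.
move=> /andP[y_gt0 y_lt].
have [x /andP[x_gt0 xy]] := @tan_MVT 0 y (lexx 0) y_gt0 y_lt.
rewrite tan0 !subr0 => ->.
have cos_gt0 : 0 < cos x by rewrite cos_gt0_halfpi // ltW //= (lt_trans xy).
have cos_lt1 : cos x < 1 by rewrite -cos0 cos_lt_halfpi // (lt_trans xy).
rewrite mulrC ltr_pdivlMr ?exprn_gt0 //.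
have : 0 < 1 - cos x ^+ 2 by rewrite subr_gt0 expr_lt1 // ltW.
by move/(mulr_gt0 y_gt0); lra.
Qed.

Lemma tan_gt0_halfpi (y : R) : 0 < y < pi / 2 -> 0 < tan y.
Proof.
move=> y_bounds; case/andP: (y_bounds) => y_gt0 _.
exact: lt_trans y_gt0 (id_lt_tan _ y_bounds).
Qed.

(* Convexity of tan on [0, pi/2): the two MVT slopes compare because cos decreases. *)
Lemma tan_mul_le (s y : R) : 0 < s < 1 -> 0 < y < pi / 2 -> tan (s * y) <= s * tan y.
Proof.
move=> /andP[s_gt0 s_lt1] /andP[y_gt0 y_lt].
have sy_gt0 : 0 < s * y by rewrite mulr_gt0.
have sy_lt : s * y < y by rewrite gtr_pMl.
have [x1 /andP[x1_gt0 x1_lt] E1] := @tan_MVT 0 (s * y) (lexx 0) sy_gt0 (lt_trans sy_lt y_lt).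
have [x2 /andP[x2_gt x2_lt] E2] := @tan_MVT (s * y) y (ltW sy_gt0) sy_lt y_lt.
rewrite tan0 !subr0 in E1.
have cos1_gt0 : 0 < cos x1.
  by rewrite cos_gt0_halfpi // ltW //= (lt_trans x1_lt (lt_trans sy_lt y_lt)).
have cos2_gt0 : 0 < cos x2.
  by rewrite cos_gt0_halfpi // ltW /= ?(lt_trans sy_gt0 x2_gt) ?(lt_trans x2_lt y_lt).
have slopes : (cos x1)^-2 <= (cos x2)^-2.
  rewrite lef_pV2 ?qualifE /= ?exprn_gt0 // ler_pXn2r ?qualifE /= ?ltW //.
  by rewrite cos_lt_halfpi ?ltW ?(lt_trans x1_lt x2_gt) ?(lt_trans x2_lt y_lt).
have -> : tan y = tan (s * y) + (cos x2)^-2 * (y - s * y) by rewrite -E2; ring.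
rewrite E1 -subr_ge0.
have -> : s * ((cos x1)^-2 * (s * y) + (cos x2)^-2 * (y - s * y)) - (cos x1)^-2 * (s * y)
  = (1 - s) * (s * y) * ((cos x2)^-2 - (cos x1)^-2) by ring.
by rewrite !mulr_ge0 ?subr_ge0 // ltW.
Qed.

Lemma tan_pi12 : tan (pi / 12) = 2 - Num.sqrt 3 :> R.
Proof.
have pi_gt0 := pi_gt0 R.
have pi12_bounds : (0 : R) < pi / 12 < (pi : R) / 2 by apply/andP; split; lra.
have cos12_neq0 : cos (pi / 12) != 0 :> R by rewrite gt_eqF // cos_gt0_halfpi //; lra.
have cos6_neq0 : cos (pi / 6) != 0 :> R by rewrite gt_eqF // cos_gt0_halfpi //; lra.
have t_gt0 : 0 < tan (pi / 12) :> R by exact: tan_gt0_halfpi.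
have t_lt1 : tan (pi / 12) < 1 :> R.
  by rewrite -[X in _ < X]tan_piquarter ltr_tan ?in_itv /=; try (apply/andP; split); lra.
have double : tan (pi / 6) * (1 - tan (pi / 12) ^+ 2) = 2 * tan (pi / 12) :> R.
  have t2_neq1 : 1 - tan (pi / 12) ^+ 2 != 0 :> R.
    by rewrite subr_eq0 eq_sym lt_eqF // expr_lt1 // ltW.
  rewrite (_ : pi / 6 = pi / 12 *+ 2); last by rewrite mulr2n; lra.
  by rewrite tan_mulr2n // divfK // mulr_natl.
have sum : tan (pi / 6) + tan (pi / 12) = 1 - tan (pi / 6) * tan (pi / 12) :> R.
  by apply: divr1_eq; rewrite -tanD // -[RHS]tan_piquarter; congr tan; lra.
move: t_gt0 t_lt1 double sum.
set t := tan (pi / 12); set u := tan (pi / 6) => t_gt0 t_lt1 double sum.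
have sum' : (1 - t) * (u * (1 + t)) = (1 - t) * (1 - t) by congr (_ * _); lra.
have : (2 - t) ^+ 2 = 3 by nra.
by move=> <-; rewrite sqrtr_sqr gtr0_norm; [ring | lra].
Qed.

Lemma lt_scaled_tan (m th : R) : 0 < m -> 0 < th < 1 ->
  m * th < 2 / pi * m * tan (pi / 2 * th).
Proof.
move=> m_gt0 /andP[th_gt0 th_lt1]; have pi_gt0 := pi_gt0 R.
have y_bounds : 0 < pi / 2 * th < (pi : R) / 2.
  by rewrite mulr_gt0 ?divr_gt0 //= gtr_pMr ?divr_gt0.
have -> : m * th = 2 / pi * m * (pi / 2 * th) by field; lra.
by rewrite ltr_pM2l ?mulr_gt0 ?divr_gt0 ?invr_gt0 //; exact: id_lt_tan.
Qed.

Lemma scaled_tan_lt (m th : R) : 2 <= m -> 0 < th -> m * th < 1 / 3 ->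
  2 / pi * m * tan (pi / 2 * th) < 4 / pi * (2 - Num.sqrt 3).
Proof.
move=> m_ge2 th_gt0 mth_lt; have pi_gt0 := pi_gt0 R.
have th_lt : th < 1 / 6.
  have : 2 * th <= m * th by rewrite ler_pM2r.
  lra.
have -> : pi / 2 * th = (6 * th) * (pi / 12) by field; lra.
have tan_le := @tan_mul_le (6 * th) (pi / 12) (ltac:(apply/andP; split; lra))
  (ltac:(apply/andP; split; lra)).
rewrite tan_pi12 in tan_le.
have sqrt3_lt2 : 0 < 2 - Num.sqrt 3 :> R.
  by rewrite -tan_pi12 tan_gt0_halfpi //; apply/andP; split; lra.
have coef_ge0 : 0 <= 2 / pi * m by rewrite mulr_ge0 ?divr_ge0 //; lra.
apply: (le_lt_trans (ler_wpM2l coef_ge0 tan_le)).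
have -> : 2 / pi * m * (6 * th * (2 - Num.sqrt 3)) = (12 * (m * th)) / pi * (2 - Num.sqrt 3).
  by field; lra.
by rewrite ltr_pM2r // ltr_pM2r ?invr_gt0 //; lra.
Qed.

End Tangent.

Section Gamma.
Context {R : realType} {c : nat -> nat} {gamma : R}.
Hypotheses (c0 : c 0%N = 0%N) (c1 : c 1%N = 1%N).
Hypothesis c_even : forall n, (0 < n)%N -> c (2 * n)%N = 1%N.
Hypothesis c_odd : forall n, (0 < n)%N -> c (2 * n).+1 = 1%N \/ c (2 * n).+1 = 2%N.
Hypothesis c_gamma : cf_value c gamma.

Lemma c_odd12 k : c (2 * k).+1 = 1%N \/ c (2 * k).+1 = 2%N.
Proof. by case: k => [|k]; [left | exact: c_odd]. Qed.

Lemma c_pos : positive_quotients c.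
Proof.
move=> i; rewrite -[i](odd_double_half i) -mul2n.
case: (odd i) => /= [_ | i_gt0]; first by rewrite add1n; case: (c_odd12 i./2) => ->.
by rewrite add0n in i_gt0 *; rewrite c_even //; lia.
Qed.

Lemma c_odd2_index_gt0 n : c (2 * n).+1 = 2%N -> (0 < n)%N.
Proof. by case: (posnP n) => [-> /=|//]; rewrite c1. Qed.

Lemma c_evenSS k : c (2 * k).+2 = 1%N.
Proof. by have := c_even k.+1 isT; rewrite mulnS. Qed.

Lemma cont_q_oddSS k : cont_q c (2 * k).+3 = cont_q c (2 * k).+2 + cont_q c (2 * k).+1.
Proof. by rewrite cont_qSS c_evenSS mul1r. Qed.

Lemma cont_q_odd_ratio n : 4 * cont_q c (2 * n) <= 3 * cont_q c (2 * n).+1.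
Proof.
case: n => [//|n]; rewrite mulnS cont_q_oddSS cont_qSS.
have := cont_q_le c_pos (2 * n); have := cont_q_ge0 c_pos (2 * n).
by case: (c_odd12 n) => ->; lia.
Qed.

Lemma gamma_gt0 : 0 < gamma.
Proof.
have := convergent_even_lt_value c_pos c_gamma 0.
by rewrite /cont_p /cont_q /= c0 mul1r.
Qed.

Lemma gamma_lt1 : gamma < 1.
Proof.
have := convergent_odd_gt_value c_pos c_gamma 0.
by rewrite /cont_p /cont_q /= c0 c1 mul1r.
Qed.

Lemma cont_q_odd_le_double n : (0 < n)%N -> cont_q c (2 * n).+1 <= 2 * cont_q c (2 * n).
Proof.
case: n => [//|n] _; rewrite (_ : (2 * n.+1)%N = (2 * n).+2) ?cont_q_oddSS; last by lia.
by have := cont_q_le c_pos (2 * n).+1; lia.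
Qed.

Lemma small_error_odd k (m : nat) (p : int) :
  cont_q c (2 * k).+1 <= m%:Z < cont_q c (2 * k).+2 ->
  0 <= m%:R * gamma - p%:~R -> m%:R * (m%:R * gamma - p%:~R) < 1 ->
  p * cont_q c (2 * k).+1 = m%:Z * cont_p c (2 * k).+1.
Proof.
rewrite pmulrn.
apply: (@small_error_below _ _ (cont_q c (2 * k).+2) _ (cont_p c (2 * k).+2));
  rewrite ?(cont_q_gt0 c_pos) //.
- by rewrite (cont_det c (2 * k).+1) sign_doubleSS.
- exact: convergent_even_lt_value c_pos c_gamma k.
- exact: convergent_odd_gt_value c_pos c_gamma k.
Qed.

Lemma no_small_error_even k (m : nat) (p : int) : (0 < k)%N ->
  cont_q c (2 * k).+2 <= m%:Z < cont_q c (2 * k).+3 ->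
  0 <= m%:R * gamma - p%:~R -> m%:R * (m%:R * gamma - p%:~R) < 1 -> False.
Proof.
move=> k_gt0; rewrite pmulrn.
apply: (@no_small_error_above _ (cont_q c (2 * k).+2) (cont_q c (2 * k).+3)
  (cont_p c (2 * k).+2) (cont_p c (2 * k).+3));
  rewrite ?(cont_q_gt0 c_pos) //.
- have := cont_q_ltSS c_pos (2 * k) (ltac:(lia)).
  by rewrite cont_q_oddSS; lia.
- by rewrite (cont_det c (2 * k).+2) exprS sign_doubleSS mulr1.
- exact: convergent_odd_gt_value c_pos c_gamma k.
- by have := convergent_even_lt_value c_pos c_gamma k.+1; rewrite mulnS.
Qed.

Lemma small_error_convergent (m : nat) (p : int) : (0 < m)%N ->
  0 <= m%:R * gamma - p%:~R -> m%:R * (m%:R * gamma - p%:~R) < 1 ->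
  exists n, (p%:~R / m%:R : rat) = convergent c n.
Proof.
move=> m_gt0 err_ge0 err_lt1.
have [m_le1 | m_ge2] := leqP m 1.
  have m1 : m = 1%N by lia.
  rewrite m1 !mul1r in err_ge0 err_lt1 *.
  have [g_gt0 g_lt1] := (gamma_gt0, gamma_lt1).
  have p_lt1 : p < 1 by rewrite -(ltrz1 R); lra.
  have p_gtN1 : -1 < p by rewrite -(ltr_int R) mulrNz; lra.
  by exists 0%N; rewrite (_ : p = 0) ?mul0r /convergent /= ?c0 //; lia.
have q3 : cont_q c 3 <= m%:Z by rewrite /cont_q /= c1 (c_evenSS 0); lia.
have [i i_ge3 bracket] := cont_q_bracket c_pos 3 m q3.
have on_line : p * cont_q c i = m%:Z * cont_p c i.
  have := odd_double_half i; rewrite -mul2n; case: (odd i) => /= i_eq.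
    by rewrite -i_eq add1n in bracket *; exact: small_error_odd _ _ _ bracket err_ge0 err_lt1.
  have [k k_gt0 {}i_eq] : exists2 k, (0 < k)%N & i = (2 * k).+2.
    by exists (i./2).-1; move: i_ge3 i_eq; move: (i./2) => h; lia.
  by rewrite i_eq in bracket; case: (no_small_error_even _ _ _ k_gt0 bracket err_ge0 err_lt1).
case: i i_ge3 on_line {bracket} => [//|j] _ on_line.
exists j; rewrite (convergentE _ _ c_pos).
have X_neq0 : (cont_q c j.+1)%:~R != 0 :> rat by rewrite intr_eq0 gt_eqF // (cont_q_gt0 c_pos).
have m_neq0 : (m%:Z)%:~R != 0 :> rat by rewrite intr_eq0; lia.
by apply/eqP; rewrite pmulrn eqr_div // -!intrM on_line mulrC.
Qed.

Lemma even_scaled_error_gt n : c (2 * n).+1 = 1%N ->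
  2 / 5 < (cont_q c (2 * n).+1)%:~R
            * ((cont_q c (2 * n).+1)%:~R * gamma - (cont_p c (2 * n).+1)%:~R).
Proof.
move=> c_2n1.
have c_2n3 : c (2 * n).+3 = 1%N \/ c (2 * n).+3 = 2%N by have := c_odd12 n.+1; rewrite mulnS.
have c_2n4 : c (2 * n).+4 = 1%N by have := c_evenSS n.+1; rewrite mulnS.
have p5E := recurrence_add5 (cont_pSS c) c_2n1 (c_evenSS n) c_2n4.
have q5E := recurrence_add5 (cont_qSS c) c_2n1 (c_evenSS n) c_2n4.
have det := cont_det c (2 * n); rewrite sign_doubleS in det.
have ratio := cont_q_odd_ratio n.
have below5 : (cont_p c (2 * n).+4.+1)%:~R < (cont_q c (2 * n).+4.+1)%:~R * gamma.
  by have := convergent_even_lt_value c_pos c_gamma n.+2; rewrite !mulnS.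
apply: (scaled_error_gt _ _ _ below5); rewrite ?(cont_q_gt0 c_pos) //.
rewrite p5E q5E; have := cont_q_ge0 c_pos (2 * n).
by case: c_2n3 => ->; nia.
Qed.

Lemma even_scaled_error_lt n : c (2 * n).+1 = 2%N ->
  (cont_q c (2 * n).+1)%:~R
    * ((cont_q c (2 * n).+1)%:~R * gamma - (cont_p c (2 * n).+1)%:~R) < 1 / 3.
Proof.
move=> c_2n1.
have n_gt0 := c_odd2_index_gt0 n c_2n1.
have c_2n3 : c (2 * n).+3 = 1%N \/ c (2 * n).+3 = 2%N by have := c_odd12 n.+1; rewrite mulnS.
have p4E := recurrence_add4 (cont_pSS c) c_2n1 (c_evenSS n).
have q4E := recurrence_add4 (cont_qSS c) c_2n1 (c_evenSS n).
have det := cont_det c (2 * n); rewrite sign_doubleS in det.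
have ratio := cont_q_odd_le_double n n_gt0.
have above4 : (cont_q c (2 * n).+4)%:~R * gamma < (cont_p c (2 * n).+4)%:~R.
  by have := convergent_odd_gt_value c_pos c_gamma n.+1; rewrite mulnS.
apply: (@scaled_error_lt _ 1 3 _ _ _ _ _ _ _ _ above4); rewrite ?(cont_q_gt0 c_pos) //.
rewrite p4E q4E; have := cont_q_ge0 c_pos (2 * n).
by case: c_2n3 => ->; nia.
Qed.

Lemma error_at_even_convergent {n m : nat} {p : int} :
  p = cf_p c (2 * n) -> m%:Z = cf_q c (2 * n) ->
  [/\ (m%:R : R) = (cont_q c (2 * n).+1)%:~R,
      m%:R * gamma - p%:~R = (cont_q c (2 * n).+1)%:~R * gamma - (cont_p c (2 * n).+1)%:~R
    & 0 < m%:R * gamma - p%:~R].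
Proof.
rewrite (cf_pE _ _ c_pos) (cf_qE _ _ c_pos) => -> m_eq.
have mE : (m%:R : R) = (cont_q c (2 * n).+1)%:~R by rewrite pmulrn m_eq.
by rewrite mE subr_gt0; split=> //; exact: convergent_even_lt_value c_pos c_gamma n.
Qed.

Lemma convergent_error_gt {n m : nat} {p : int} :
  p = cf_p c (2 * n) -> m%:Z = cf_q c (2 * n) -> c (2 * n).+1 = 1%N ->
  0 < m%:R * gamma - p%:~R /\ 2 / 5 < m%:R * (m%:R * gamma - p%:~R).
Proof.
move=> p_eq m_eq c_2n1; have [mE errE err_gt0] := error_at_even_convergent p_eq m_eq.
by split=> //; rewrite errE mE; exact: even_scaled_error_gt.
Qed.

Lemma convergent_error_lt {n m : nat} {p : int} :
  p = cf_p c (2 * n) -> m%:Z = cf_q c (2 * n) -> c (2 * n).+1 = 2%N ->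
  [/\ 2 <= (m%:R : R), 0 < m%:R * gamma - p%:~R & m%:R * (m%:R * gamma - p%:~R) < 1 / 3].
Proof.
move=> p_eq m_eq c_2n1; have [mE errE err_gt0] := error_at_even_convergent p_eq m_eq.
split=> //; last by rewrite errE mE; exact: even_scaled_error_lt.
have := cont_q_ge_index c_pos (2 * n); have := c_odd2_index_gt0 n c_2n1.
by rewrite (cf_qE _ _ c_pos) in m_eq; rewrite (ler_nat R 2 m); lia.
Qed.

End Gamma.

Theorem lemma5p3 (R : realType) (c : nat -> nat) (gamma : R) :
  c 0%N = 0%N ->
  c 1%N = 1%N ->
  (forall n : nat, (0 < n)%N -> c (2 * n)%N = 1%N) ->
  (forall n : nat, (0 < n)%N -> c (2 * n).+1 = 1%N \/ c (2 * n).+1 = 2%N) ->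
  cf_value c gamma ->
  forall m : nat, (0 < m)%N ->
    let fl := Num.floor (m%:R * gamma) in
    let F := 2 / pi * m%:R * tan (pi / 2 * (m%:R * gamma - fl%:~R)) in
    ((forall n : nat, (fl%:~R / m%:R : rat) != convergent c n) -> 1 < F)
    /\ ((exists n : nat, [/\ fl = cf_p c (2 * n), m%:Z = cf_q c (2 * n)
                           & c (2 * n).+1 = 1%N]) -> 2 / 5 < F)
    /\ ((exists n : nat, [/\ fl = cf_p c (2 * n), m%:Z = cf_q c (2 * n)
                           & c (2 * n).+1 = 2%N]) -> F < 4 / pi * (2 - Num.sqrt 3)).
Proof.
move=> c0 c1 c_even c_odd c_gamma m m_gt0 fl F.
have /andP[fl_le fl_gt] := floor_itv (m%:R * gamma); rewrite -/fl intrD mulr1z in fl_gt.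
have err_ge0 : 0 <= m%:R * gamma - fl%:~R by rewrite subr_ge0.
have F_gt : 0 < m%:R * gamma - fl%:~R -> m%:R * (m%:R * gamma - fl%:~R) < F.
  by move=> err_gt0; apply: lt_scaled_tan; rewrite ?ltr0n // err_gt0 ltrBlDl.
split; [|split].
- move=> not_convergent; have err_ge1 : 1 <= m%:R * (m%:R * gamma - fl%:~R).
    rewrite leNgt; apply/negP.
    move=> /(small_error_convergent c0 c1 c_even c_odd c_gamma _ _ m_gt0 err_ge0) [n conv_n].
    by have := not_convergent n; rewrite conv_n eqxx.
  have err_gt0 : 0 < m%:R * gamma - fl%:~R.
    by rewrite -(@pmulr_rgt0 _ m%:R) ?ltr0n // (lt_le_trans ltr01 err_ge1).
  exact: le_lt_trans err_ge1 (F_gt err_gt0).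
- case=> n [fl_eq m_eq c_2n1].
  have [err_gt0 err_gt] := convergent_error_gt c0 c1 c_even c_odd c_gamma fl_eq m_eq c_2n1.
  exact: lt_trans err_gt (F_gt err_gt0).
- case=> n [fl_eq m_eq c_2n1].
  have [m_ge2 err_gt0 err_lt] := convergent_error_lt c0 c1 c_even c_odd c_gamma fl_eq m_eq c_2n1.
  exact: scaled_tan_lt m_ge2 err_gt0 err_lt.
Qed.
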